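(* A feasible solution $(\bm\alpha,\bm\beta)\ge0$ of the problem $$\Gamma^*=\max_{\bm\alpha,\bm\beta\ge0}\min_{c}\alpha(c)\min_{d\in\mathcal P_c}\min_{d'\in\mathcal U_c}G_{d,d'}(\beta(c,d),\beta(c,d'))$$ subject to $\sum_c\alpha(c)=1$ and $\sum_{d\in\mathcal D_c}\beta(c,d)=1$, is optimal only if the following holds: there exists $z>0$ such that for all $c\in\mathcal C$, $d\in\mathcal P_c$ and $d'\in\mathcal U_c$, $$\min_{\tilde d\in\mathcal P_c}\alpha(c)G_{\tilde d,d'}(\beta(c,\tilde d),\beta(c,d'))=\min_{\tilde d'\in\mathcal U_c}\alpha(c)G_{d,\tilde d'}(\beta(c,d),\beta(c,\tilde d'))=z.$$
   Context: Setting. - $\mathcal C$ is a finite set of contexts and $\mathcal D=\bigsqcup_c\mathcal D_c$ a finite set of designs. - Design $d$ has true parameter $\theta^*_d=(\mu^*_d,\eta^*_d)\in\Theta=M\times H$ ($M\subseteq\mathbb R$), with distinct $\mu^*_d$. - $\Theta$ is compact; the KL divergence $D(\theta^*\Vert\theta)$ of the parametric family is finite and continuously differentiable in $\theta$. - $\mathcal P_c$ is the set of the $m_c$ designs in $\mathcal D_c$ with largest $\mu^*_d$, and $\mathcal U_c=\mathcal D_c\setminus\mathcal P_c$. Rate function. For $x,y\ge0$, $$G_{d,d'}(x,y)=\inf\{xD(\theta^*_d\Vert\theta_d)+yD(\theta^*_{d'}\Vert\theta_{d'}):\theta_d,\theta_{d'}\in\Theta,\ \mu_{d'}\ge\mu_d\}.$$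 $G_{d,d'}$ is non-decreasing, concave, continuous, and positively homogeneous of degree 1. *)

From HB Require Import structures.
From mathcomp Require Import all_boot all_order all_algebra.
From mathcomp Require Import all_classical all_reals all_analysis.
Set Implicit Arguments. Unset Strict Implicit. Unset Printing Implicit Defensive.
Import Order.TTheory GRing.Theory Num.Theory.
Import numFieldNormedType.Exports.
Local Open Scope classical_set_scope.
Local Open Scope ring_scope.

Notation param R k := (R * 'rV[R]_k)%type.

(* f : param -> R is continuously differentiable on A: on some open set
   containing A, f is differentiable and every directional derivative
   x |-> 'd f x v is continuous (equivalent to C^1 in finite dimension). *)
Definition C1_on {R : realType} {k : nat} (f : param R k -> R)
    (A : set (param R k)) : Prop :=
  exists U : set (param R k), [/\ open U, A `<=` U,
    (forall x, U x -> differentiable f x) &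
    (forall v : param R k, {in U, continuous (fun x => 'd f x v)})].

Definition minover {R : realType} {T : Type} (A : set T) (f : T -> R) : R :=
  inf [set f x | x in A].

Section Setting.
Variables (R : realType) (k : nat) (C D : finType).
Variables (ctx : D -> C) (Theta : set (param R k))
          (KL : param R k -> param R k -> R) (thstar : D -> param R k)
          (m : C -> nat).

Definition mu (th : param R k) : R := th.1.

Definition Dc (c : C) : set D := [set d | ctx d = c].

(* P_c : the m_c designs of D_c with largest true mean (means are distinct),
   i.e. those designs of D_c beaten by fewer than m_c designs of D_c. *)
Definition Pc (c : C) : set D :=
  [set d | ctx d = c /\
     (#|[set d' : D | (ctx d' == c) && (mu (thstar d) < mu (thstar d'))%R]| < m c)%N].

Definition Uc (c : C) : set D := Dc c `\` Pc c.

Definition G (d d' : D) (x y : R) : R :=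
  inf [set x * KL (thstar d) t.1 + y * KL (thstar d') t.2
       | t in [set t : param R k * param R k |
               Theta t.1 /\ Theta t.2 /\ mu t.1 <= mu t.2]].

Definition feasible (alpha : C -> R) (beta : D -> R) : Prop :=
  [/\ (forall c, 0 <= alpha c), (forall d, 0 <= beta d),
      \sum_(c : C) alpha c = 1 &
      forall c, \sum_(d : D | ctx d == c) beta d = 1].

Definition objective (alpha : C -> R) (beta : D -> R) : R :=
  minover setT (fun c => alpha c *
    minover (Pc c) (fun d => minover (Uc c) (fun d' => G d d' (beta d) (beta d')))).

Definition optimal (alpha : C -> R) (beta : D -> R) : Prop :=
  feasible alpha beta /\
  forall alpha' beta', feasible alpha' beta' -> objective alpha' beta' <= objective alpha beta.

End Setting.

(* Both minima in the statement are bounded below by the optimal value [z = Gamma^*] of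
   the max-min problem, which is positive because the uniform allocation already has
   positive rates ([G] is positive on pairs (d, d') with mu d' < mu d, by compactness).
   If, for some context c and design e, every pair of c through e had value strictly
   above z, one could move a little sampling effort beta from e to the other designs
   of c: pairs through e stay above z, all other pairs of c gain a factor > 1, so
   context c rises strictly above z; then moving a little of the weight alpha away
   from c lifts every context strictly above z, contradicting optimality. *)

From HB Require Import structures.
From mathcomp Require Import all_boot all_order all_algebra.
From mathcomp Require Import all_classical all_reals all_analysis.
From mathcomp Require Import ring lra.
Set Implicit Arguments. Unset Strict Implicit. Unset Printing Implicit Defensive.
Import Order.TTheory GRing.Theory Num.Theory.
Import numFieldNormedType.Exports.
Local Open Scope classical_set_scope.
Local Open Scope ring_scope.

Section Minover.
Variables (R : realType) (T : finType).
Implicit Types (A : set T) (f g : T -> R).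

Lemma minover_attained A f x1 :
  A x1 -> exists2 x0, A x0 & minover A f = f x0 /\ forall x, A x -> f x0 <= f x.
Proof.
move=> Ax1.
have Px1 : `[< A x1 >] by apply/asboolP.
case: (@arg_minP _ R T x1 (fun x => `[< A x >]) f Px1) => x0 /asboolP Ax0 x0_min.
have f_ge x : A x -> f x0 <= f x by move=> Ax; apply: x0_min; apply/asboolP.
exists x0 => //; split => //; apply/eqP; rewrite eq_le; apply/andP; split.
  by apply: ge_inf; [exists (f x0) => _ [x Ax <-]; exact: f_ge | exists x0].
by apply: lb_le_inf; [exists (f x0), x0 | move=> _ [x Ax <-]; exact: f_ge].
Qed.

Lemma minover_le A f x : A x -> minover A f <= f x.
Proof. by move=> Ax; have [x0 _ [-> f_ge]] := minover_attained f Ax; exact: f_ge. Qed.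

Lemma minover_ge A f b x1 : A x1 -> (forall x, A x -> b <= f x) -> b <= minover A f.
Proof. by move=> Ax1 lb; have [x0 Ax0 [-> _]] := minover_attained f Ax1; exact: lb. Qed.

Lemma minover_gt A f b x1 : A x1 -> (forall x, A x -> b < f x) -> b < minover A f.
Proof. by move=> Ax1 lb; have [x0 Ax0 [-> _]] := minover_attained f Ax1; exact: lb. Qed.

End Minover.

Lemma eq_minover (R : realType) (T : Type) (A : set T) (f g : T -> R) :
  (forall x, A x -> f x = g x) -> minover A f = minover A g.
Proof. by move=> fg; rewrite /minover (eq_imagel fg). Qed.

Definition ordered_pairs (R : realType) (k : nat) (Theta : set (param R k)) :
    set (param R k * param R k) :=
  [set t | Theta t.1 /\ Theta t.2 /\ mu t.1 <= mu t.2].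

Section RateFunction.
Variables (R : realType) (k : nat) (D : finType) (Theta : set (param R k))
  (KL : param R k -> param R k -> R) (thstar : D -> param R k).
Hypothesis thstar_in : forall d, Theta (thstar d).
Hypothesis KL_ge0 : forall th th', Theta th -> Theta th' -> 0 <= KL th th'.

Local Notation G := (G Theta KL thstar).

Let G_values d d' x y :=
  [set x * KL (thstar d) t.1 + y * KL (thstar d') t.2 | t in ordered_pairs Theta].

Let G_values_neq0 d d' x y : G_values d d' x y !=set0.
Proof.
exists (x * KL (thstar d) (thstar d') + y * KL (thstar d') (thstar d')).
by have := thstar_in d'; exists (thstar d', thstar d').
Qed.

Let G_values_ge0 d d' x y : 0 <= x -> 0 <= y -> lbound (G_values d d' x y) 0.
Proof. by move=> x0 y0 _ [t [t1 [t2 _]] <-]; rewrite addr_ge0 // mulr_ge0 // KL_ge0. Qed.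

Lemma G_ge0 d d' x y : 0 <= x -> 0 <= y -> 0 <= G d d' x y.
Proof. by move=> x0 y0; apply: lb_le_inf; [exact: G_values_neq0 | exact: G_values_ge0]. Qed.

Lemma G_le d d' x y t : 0 <= x -> 0 <= y ->
  Theta t.1 -> Theta t.2 -> mu t.1 <= mu t.2 ->
  G d d' x y <= x * KL (thstar d) t.1 + y * KL (thstar d') t.2.
Proof. by move=> x0 y0 t1 t2 t12; apply: ge_inf; [exists 0; exact: G_values_ge0 | exists t]. Qed.

Lemma G_ge_scaled d d' s x y x' y' : 0 <= s -> 0 <= x -> 0 <= y ->
  s * x <= x' -> s * y <= y' -> s * G d d' x y <= G d d' x' y'.
Proof.
move=> s0 x0 y0 xx' yy'; apply: lb_le_inf; first exact: G_values_neq0.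
move=> _ [t [t1 [t2 t12]] <-].
apply: (@le_trans _ _ (s * (x * KL (thstar d) t.1 + y * KL (thstar d') t.2))).
  by rewrite ler_wpM2l // G_le.
by rewrite mulrDr !mulrA lerD // ler_wpM2r // KL_ge0.
Qed.

Hypothesis KL_refl : forall th, Theta th -> KL th th = 0.

Lemma G_le0_weight0 d d' x y : 0 <= x -> 0 <= y -> x = 0 \/ y = 0 -> G d d' x y <= 0.
Proof.
move=> x0 y0 [->|->].
  apply: le_trans (@G_le d d' 0 y (thstar d', thstar d') _ y0 (thstar_in d') (thstar_in d') _) _
    => //=.
  by rewrite KL_refl // mul0r mulr0 addr0.
apply: le_trans (@G_le d d' x 0 (thstar d, thstar d) x0 _ (thstar_in d) (thstar_in d) _) _ => //=.
by rewrite KL_refl // mul0r mulr0 addr0.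
Qed.

End RateFunction.

Lemma compact_ordered_pairs (R : realType) (k : nat) (Theta : set (param R k)) :
  compact Theta -> compact (ordered_pairs Theta).
Proof.
move=> cTheta.
have -> : ordered_pairs Theta = (Theta `*` Theta) `&`
    ((fun t : param R k * param R k => mu t.2 - mu t.1) @^-1` [set r | 0 <= r]).
  by apply/seteqP; split => [t [t1 [t2 t12]]|t [[t1 t2] t12]];
    split => //=; rewrite ?subr_ge0 // -subr_ge0.
apply: compact_closedI; first exact: compact_setX.
apply: preimage_closed; last exact: closed_ge.
move=> t _; apply: cvgB.
  by apply: continuous_comp; [exact: cvg_snd | exact: cvg_fst].
by apply: continuous_comp; [exact: cvg_fst | exact: cvg_fst].
Qed.

Section RatePositive.
Variables (R : realType) (k : nat) (D : finType) (Theta : set (param R k))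
  (KL : param R k -> param R k -> R) (thstar : D -> param R k).
Hypothesis Theta_compact : compact Theta.
Hypothesis thstar_in : forall d, Theta (thstar d).
Hypothesis KL_ge0 : forall th th', Theta th -> Theta th' -> 0 <= KL th th'.
Hypothesis KL_eq0 : forall th th', Theta th -> Theta th' -> KL th th' = 0 -> th = th'.
Hypothesis KL_cont : forall d th, Theta th -> {for th, continuous (KL (thstar d))}.

(* The infimum defining [G] is attained on the compact set of ordered pairs; at the
   minimiser one of the two divergences is positive, since otherwise the minimiser
   would be [(thstar d, thstar d')], which is not ordered. *)
Lemma G_gt0 d d' x y : mu (thstar d') < mu (thstar d) -> 0 < x -> 0 < y ->
  0 < G Theta KL thstar d d' x y.
Proof.
move=> mu_lt x0 y0.
pose S := ordered_pairs Theta.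
pose f t := x * KL (thstar d) t.1 + y * KL (thstar d') t.2.
have S_neq0 : S !=set0 by have := thstar_in d'; exists (thstar d', thstar d').
have f_cont : {within S, continuous f}.
  apply: continuous_in_subspaceT => t; rewrite inE => -[t1 [t2 _]].
  apply: cvgD; apply: cvgM (cvg_cst _) _; apply: continuous_comp.
  - exact: cvg_fst.
  - exact: KL_cont.
  - exact: cvg_snd.
  - exact: KL_cont.
have [t0 /set_mem [t1 [t2 t12]] t0_min] :=
  compact_EVT_min S_neq0 (compact_ordered_pairs Theta_compact) f_cont.
apply: (@lt_le_trans _ _ (f t0)); last first.
  apply: lb_le_inf; first by have [x1 Sx1] := S_neq0; exists (f x1), x1.
  by move=> _ [t St <-]; apply: t0_min; exact: mem_set.
have K1 := KL_ge0 (thstar_in d) t1; have K2 := KL_ge0 (thstar_in d') t2.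
rewrite /f; case: (ltrP 0 (KL (thstar d) t0.1)) => K1'.
  by apply: ltr_wpDr; [rewrite mulr_ge0 // ltW | rewrite mulr_gt0].
case: (ltrP 0 (KL (thstar d') t0.2)) => K2'.
  by apply: ltr_wpDl; [rewrite mulr_ge0 // ltW | rewrite mulr_gt0].
have e1 : thstar d = t0.1 by apply: KL_eq0 => //; apply/eqP; rewrite eq_le K1'.
have e2 : thstar d' = t0.2 by apply: KL_eq0 => //; apply/eqP; rewrite eq_le K2'.
by move: t12; rewrite -e1 -e2 leNgt mu_lt.
Qed.

End RatePositive.

Section Designs.
Variables (R : realType) (k : nat) (C D : finType) (ctx : D -> C)
  (thstar : D -> param R k) (m : C -> nat).

Local Notation P := (Pc ctx thstar m).
Local Notation U := (Uc ctx thstar m).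

Lemma Pc_ctx c d : P c d -> ctx d = c. Proof. by case. Qed.

Lemma Uc_ctx c d : U c d -> ctx d = c. Proof. by case. Qed.

Lemma mu_Uc_lt_Pc c d d' : P c d -> U c d' -> mu (thstar d') < mu (thstar d).
Proof.
move=> [cd Pd] [cd' Pd']; rewrite ltNge; apply/negP => mu_le.
apply: Pd'; split => //; apply: leq_ltn_trans Pd; apply: subset_leq_card.
apply/fintype.subsetP => x; rewrite !inE => /andP[cx lt_x].
by rewrite /= cx; exact: le_lt_trans lt_x.
Qed.

Hypothesis mu_inj : injective (fun d => mu (thstar d)).
Hypothesis m_bounds : forall c, (0 < m c)%N /\ (m c < #|[set d : D | ctx d == c]|)%N.

Lemma card_Dc_gt0 c : (0 < #|[set d : D | ctx d == c]|)%N.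
Proof. by case: (m_bounds c) => m_gt0; exact: leq_ltn_trans. Qed.

(* The design of largest (resp. smallest) mean in [D_c] lies in [P_c] (resp. [U_c]). *)
Lemma Pc_nonempty c : exists d, P c d.
Proof.
have [d0] := card_gt0P (card_Dc_gt0 c); rewrite inE => cd0.
have [d /eqP cd d_max] := @arg_maxP _ R D d0 (fun d => ctx d == c) (fun d => mu (thstar d)) cd0.
exists d; split => //.
rewrite (_ : #|_| = 0%N); first by case: (m_bounds c).
apply: eq_card0 => x; rewrite [RHS]inE; apply/negbTE/negP; rewrite in_setE /= => /andP[cx lt_x].
by move: (d_max x cx); rewrite /= leNgt lt_x.
Qed.

Lemma Uc_nonempty c : exists d, U c d.
Proof.
have [d0] := card_gt0P (card_Dc_gt0 c); rewrite inE => cd0.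
have [d /eqP cd d_min] := @arg_minP _ R D d0 (fun d => ctx d == c) (fun d => mu (thstar d)) cd0.
exists d; split => // -[_ Pd].
have [_ m_lt] := m_bounds c.
suff : (#|[set d : D | ctx d == c]| <=
        #|[set d' : D | (ctx d' == c) && (mu (thstar d) < mu (thstar d'))%R]|.+1)%N.
  by move/(leq_trans m_lt); rewrite ltnS leqNgt Pd.
have Dc_d : d \in [set d : D | ctx d == c] by rewrite in_setE /= cd.
rewrite (cardD1 d) Dc_d add1n ltnS; apply: subset_leq_card.
apply/fintype.subsetP => x; rewrite inE => /andP[xd]; rewrite !in_setE /= => cx.
rewrite cx /= lt_neqAle d_min // andbT; apply: contra xd => /eqP mu_eq.
by apply/eqP; exact: mu_inj.
Qed.

End Designs.

Section ShiftMass.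
Variables (R : realFieldType) (I : finType) (S : pred I) (e : I) (eps : R) (b : I -> R).

(* Moves the mass [eps * (1 - b e)] from [e] to the rest of [S], proportionally to
   the weights there, so that the total weight of [S] is preserved. *)
Definition shift_from (i : I) : R :=
  if i == e then b e - eps * (1 - b e) else if S i then (1 + eps) * b i else b i.

Lemma shift_from_in i : S i -> i != e -> shift_from i = (1 + eps) * b i.
Proof. by rewrite /shift_from => Si /negbTE ->; rewrite Si. Qed.

Lemma shift_from_out i : ~~ S i -> S e -> shift_from i = b i.
Proof.
rewrite /shift_from => /negbTE nSi Se; rewrite nSi.
by case: eqP => // ie; move: nSi; rewrite ie Se.
Qed.

Hypothesis eps_ge0 : 0 <= eps.
Hypothesis b_ge0 : forall i, 0 <= b i.

Lemma shift_from_at : b e - eps <= shift_from e.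
Proof. by rewrite /shift_from eqxx; have := mulr_ge0 eps_ge0 (b_ge0 e); lra. Qed.

Lemma shift_from_ge0 : eps <= b e -> forall i, 0 <= shift_from i.
Proof.
move=> eps_le i; case: (eqVneq i e) => [->|ie].
  by apply: le_trans shift_from_at; rewrite subr_ge0.
by rewrite /shift_from (negbTE ie); case: (S i); rewrite ?mulr_ge0 ?addr_ge0.
Qed.

Lemma sum_shift_from : S e -> \sum_(i | S i) b i = 1 -> \sum_(i | S i) shift_from i = 1.
Proof.
move=> Se sum_b; rewrite (bigD1 e) //= {1}/shift_from eqxx.
rewrite (eq_bigr (fun i => (1 + eps) * b i)); last by move=> i /andP[Si ie]; rewrite shift_from_in.
rewrite -mulr_sumr.
have -> : \sum_(i | S i && (i != e)) b i = 1 - b e.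
  by apply/eqP; rewrite eq_sym subr_eq addrC -(bigD1 e) // sum_b.
ring.
Qed.

End ShiftMass.

Lemma reweight_all_gt (R : realFieldType) (C : finType) (a w : C -> R) (z : R) (c0 : C) :
  (forall c, 0 <= a c) -> \sum_(c : C) a c = 1 -> (forall c, 0 <= w c) -> 0 < z ->
  (forall c, z <= a c * w c) -> z < a c0 * w c0 ->
  exists a' : C -> R, [/\ forall c, 0 <= a' c, \sum_(c : C) a' c = 1 &
     forall c, z < a' c * w c].
Proof.
move=> a_ge0 sum_a w_ge0 z_gt0 z_le z_lt.
have w0_gt0 : 0 < w c0.
  rewrite lt_neqAle w_ge0 andbT; apply: contraTneq z_lt => <-.
  by rewrite mulr0 -leNgt ltW.
pose eps := (a c0 * w c0 - z) / (2 * w c0).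
have eps_w : eps * w c0 = (a c0 * w c0 - z) / 2 by rewrite /eps; field; rewrite gt_eqF.
have eps_gt0 : 0 < eps by rewrite divr_gt0 ?subr_gt0 ?mulr_gt0.
have eps_le : eps <= a c0 by rewrite -(ler_pM2r w0_gt0) eps_w; nra.
exists (shift_from xpredT c0 eps a); split.
- exact: shift_from_ge0 (ltW eps_gt0) a_ge0 eps_le.
- exact: sum_shift_from.
- move=> c; case: (eqVneq c c0) => [->|cc0].
    have := shift_from_at xpredT c0 (ltW eps_gt0) a_ge0.
    by rewrite -(ler_pM2r w0_gt0); nra.
  by rewrite shift_from_in // -mulrA; have := z_le c; nra.
Qed.

Section Optimality.
Variables (R : realType) (k : nat) (C D : finType) (ctx : D -> C)
  (Theta : set (param R k)) (KL : param R k -> param R k -> R)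
  (thstar : D -> param R k) (m : C -> nat).
Hypothesis Theta_compact : compact Theta.
Hypothesis thstar_in : forall d, Theta (thstar d).
Hypothesis mu_inj : injective (fun d => mu (thstar d)).
Hypothesis m_bounds : forall c, (0 < m c)%N /\ (m c < #|[set d : D | ctx d == c]|)%N.
Hypothesis KL_ge0 : forall th th', Theta th -> Theta th' -> 0 <= KL th th'.
Hypothesis KL_eq0 : forall th th', Theta th -> Theta th' -> KL th th' = 0 <-> th = th'.
Hypothesis KL_C1 : forall th, Theta th -> C1_on (KL th) Theta.

Local Notation G := (G Theta KL thstar).
Local Notation P := (Pc ctx thstar m).
Local Notation U := (Uc ctx thstar m).
Local Notation feasible := (feasible ctx).
Local Notation objective := (objective ctx Theta KL thstar m).
Local Notation optimal := (optimal ctx Theta KL thstar m).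

Let KL_refl th : Theta th -> KL th th = 0.
Proof. by move=> th_in; apply/(KL_eq0 th_in th_in). Qed.

Let KL_cont d th : Theta th -> {for th, continuous (KL (thstar d))}.
Proof.
move=> th_in; have [V [_ sub_V diff_V _]] := KL_C1 (thstar_in d).
exact/differentiable_continuous/diff_V/sub_V.
Qed.

Definition ctx_rate (beta : D -> R) (c : C) : R :=
  minover (P c) (fun d => minover (U c) (fun d' => G d d' (beta d) (beta d'))).

Lemma objectiveE alpha beta :
  objective alpha beta = minover setT (fun c => alpha c * ctx_rate beta c).
Proof. by []. Qed.

Lemma ctx_rate_le beta c p u : P c p -> U c u -> ctx_rate beta c <= G p u (beta p) (beta u).
Proof.
move=> Pp Uu; apply: le_trans (minover_le _ Pp) _.
exact: (minover_le (fun d' => G p d' (beta p) (beta d')) Uu).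
Qed.

Lemma ctx_rate_ge0 beta c : (forall d, 0 <= beta d) -> 0 <= ctx_rate beta c.
Proof.
move=> beta_ge0; have [p Pp] := Pc_nonempty thstar m_bounds c.
apply: (minover_ge Pp) => p' _; have [u Uu] := Uc_nonempty mu_inj m_bounds c.
by apply: (minover_ge Uu) => u' _; exact: G_ge0.
Qed.

Lemma ctx_rate_gt beta c a z :
  (forall p u, P c p -> U c u -> z < a * G p u (beta p) (beta u)) -> z < a * ctx_rate beta c.
Proof.
move=> G_gt; rewrite /ctx_rate; have [p Pp] := Pc_nonempty thstar m_bounds c.
have [p0 Pp0 [-> _]] :=
  minover_attained (fun d => minover (U c) (fun d' => G d d' (beta d) (beta d'))) Pp.
have [u Uu] := Uc_nonempty mu_inj m_bounds c.
have [u0 Uu0 [-> _]] := minover_attained (fun d' => G p0 d' (beta p0) (beta d')) Uu.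
exact: G_gt.
Qed.

Lemma eq_ctx_rate beta beta' c :
  (forall d, ctx d = c -> beta' d = beta d) -> ctx_rate beta' c = ctx_rate beta c.
Proof.
move=> beta_eq; apply: eq_minover => p Pp; apply: eq_minover => u Uu.
by rewrite !beta_eq //; [exact: Uc_ctx Uu | exact: Pc_ctx Pp].
Qed.

Lemma objective_le alpha beta c p u : feasible alpha beta -> P c p -> U c u ->
  objective alpha beta <= alpha c * G p u (beta p) (beta u).
Proof.
move=> [alpha_ge0 _ _ _] Pp Uu; rewrite objectiveE.
apply: le_trans (minover_le (fun c => alpha c * ctx_rate beta c) (I : setT c)) _.
by rewrite ler_wpM2l // ctx_rate_le.
Qed.

Lemma uniform_feasible (c0 : C) :
  feasible (fun _ => (#|C|%:R : R)^-1)
    (fun d => (#|[set d' : D | ctx d' == ctx d]|%:R : R)^-1).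
Proof.
have card_C : (#|C|%:R : R) != 0 by rewrite pnatr_eq0 -lt0n; apply/card_gt0P; exists c0.
have card_Dc c : (#|[set d : D | ctx d == c]|%:R : R) != 0.
  by rewrite pnatr_eq0 -lt0n (card_Dc_gt0 m_bounds).
split => [c|d||c]; rewrite ?invr_ge0 ?ler0n //.
  by rewrite sumr_const -[_ *+ _]mulr_natr mulVf.
rewrite (eq_bigr (fun _ => #|[set d : D | ctx d == c]|%:R^-1)); last by move=> d /eqP ->.
rewrite big_const iter_addr addr0 (_ : #|_| = #|[set d : D | ctx d == c]|).
  by rewrite -(mulr_natr (_^-1)) mulVf.
by apply: eq_card => d; rewrite [RHS]inE; apply/idP/asboolP.
Qed.

(* Comparison with the uniform allocation, all of whose rates are positive. *)
Lemma objective_gt0 alpha beta : optimal alpha beta -> 0 < objective alpha beta.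
Proof.
move=> [[_ _ sum_alpha _] alpha_opt].
have [c0 _] : exists c0 : C, True.
  case: (pickP (fun _ : C => true)) => [c0 _|C0]; first by exists c0.
  by move: sum_alpha; rewrite big_pred0 // => /esym/eqP; rewrite oner_eq0.
apply: lt_le_trans (alpha_opt _ _ (uniform_feasible c0)).
rewrite objectiveE; apply: (minover_gt (I : setT c0)) => c _.
apply: ctx_rate_gt => p u Pp Uu.
rewrite mulr_gt0 ?invr_gt0 ?ltr0n //; first by apply/card_gt0P; exists c0.
apply: (G_gt0 Theta_compact thstar_in KL_ge0 _ KL_cont (mu_Uc_lt_Pc Pp Uu));
  rewrite ?invr_gt0 ?ltr0n ?(card_Dc_gt0 m_bounds) //.
by move=> th th' th_in th'_in /(KL_eq0 th_in th'_in).
Qed.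

Lemma pair_through c e : ctx e = c -> exists p u, [/\ P c p, U c u & p = e \/ u = e].
Proof.
move=> ce; have [Pe|nPe] := pselect (P c e).
  by have [u Uu] := Uc_nonempty mu_inj m_bounds c; exists e, u; split => //; left.
by have [p Pp] := Pc_nonempty thstar m_bounds c; exists p, e; split => //; right.
Qed.

(* Taking the mass [q * beta e * (1 - beta e)] away from [e] and spreading it over
   the other designs of context [c] keeps every pair through [e] above [(1 - q) zz]
   and raises every other pair of [c] by the factor [1 + q * beta e]. *)
Lemma raise_ctx_rate alpha beta c e z zz :
  feasible alpha beta -> ctx e = c -> 0 < z -> z < zz ->
  (forall p u, P c p -> U c u -> z <= alpha c * G p u (beta p) (beta u)) ->
  (forall p u, P c p -> U c u -> p = e \/ u = e -> zz <= alpha c * G p u (beta p) (beta u)) ->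
  exists beta' : D -> R, [/\ forall d, 0 <= beta' d,
    forall c', \sum_(d | ctx d == c') beta' d = 1,
    forall d, ctx d != c -> beta' d = beta d &
    z < alpha c * ctx_rate beta' c].
Proof.
move=> [alpha_ge0 beta_ge0 _ sum_beta] ce z_gt0 z_lt z_le zz_le.
have zz_gt0 : 0 < zz by apply: lt_trans z_lt.
have beta_e_gt0 : 0 < beta e.
  rewrite lt_neqAle beta_ge0 andbT; apply/negP => /eqP beta_e0.
  have [p [u [Pp Uu pue]]] := pair_through ce.
  have G_le0 : G p u (beta p) (beta u) <= 0.
    by apply: G_le0_weight0 => //; case: pue => ->; [left | right].
  have := le_trans (zz_le p u Pp Uu pue) (mulr_ge0_le0 (alpha_ge0 c) G_le0).
  by rewrite leNgt zz_gt0.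
pose q := (zz - z) / (2 * zz).
have q_gt0 : 0 < q by rewrite divr_gt0 ?subr_gt0 ?mulr_gt0.
have q_zz : q * zz = (zz - z) / 2 by rewrite /q; field; rewrite gt_eqF.
have q_lt1 : q < 1 by rewrite -(ltr_pM2r zz_gt0) q_zz; lra.
pose eps := q * beta e.
have eps_gt0 : 0 < eps by rewrite mulr_gt0.
pose beta' := shift_from (fun d => ctx d == c) e eps beta.
have beta'_in d : ctx d = c -> d != e -> beta' d = (1 + eps) * beta d.
  by move=> /eqP cd de; rewrite /beta' shift_from_in.
have beta'_ge d : ctx d = c -> (1 - q) * beta d <= beta' d.
  move=> cd; case: (eqVneq d e) => [->|de].
    have := shift_from_at (fun d => ctx d == c) e (ltW eps_gt0) beta_ge0.
    by rewrite /beta' /eps; lra.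
  by rewrite beta'_in //; have := beta_ge0 d; nra.
exists beta'; split.
- by apply: shift_from_ge0 (ltW eps_gt0) beta_ge0 _; rewrite /eps ger_pMl // ltW.
- move=> c'; case: (eqVneq c' c) => [->|c'c]; first by apply: sum_shift_from => //; exact/eqP.
  rewrite -(sum_beta c'); apply: eq_bigr => d /eqP cd.
  by apply: shift_from_out; rewrite ?ce ?cd // eqxx.
- by move=> d cd; apply: shift_from_out; rewrite ?ce //.
apply: ctx_rate_gt => p u Pp Uu.
have [cp cu] := (Pc_ctx Pp, Uc_ctx Uu).
have scaled s : 0 <= s -> s * beta p <= beta' p -> s * beta u <= beta' u ->
    s * (alpha c * G p u (beta p) (beta u)) <= alpha c * G p u (beta' p) (beta' u).
  move=> s_ge0 sp su; rewrite mulrCA ler_wpM2l //.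
  exact: G_ge_scaled.
have [pue|] := pselect (p = e \/ u = e).
  have := scaled (1 - q); rewrite subr_ge0 !beta'_ge // => /(_ (ltW q_lt1) isT isT).
  by have := zz_le p u Pp Uu pue; nra.
move=> /not_orP[/eqP pe /eqP ue].
have := scaled (1 + eps); rewrite !beta'_in // !lexx.
move=> /(_ (addr_ge0 ler01 (ltW eps_gt0)) isT isT).
by have := z_le p u Pp Uu; nra.
Qed.

(* With slack, [raise_ctx_rate] would lift context [c] strictly above the optimum,
   and [reweight_all_gt] then every context. *)
Lemma optimal_no_slack alpha beta c e zz : optimal alpha beta -> ctx e = c ->
  objective alpha beta < zz ->
  ~ (forall p u, P c p -> U c u -> p = e \/ u = e -> zz <= alpha c * G p u (beta p) (beta u)).
Proof.
move=> opt ce z_lt zz_le; have z_gt0 := objective_gt0 opt.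
have [feas alpha_opt] := opt; have [alpha_ge0 _ sum_alpha _] := feas.
have [beta' [beta'_ge0 sum_beta' beta'_out z_lt_c]] :=
  raise_ctx_rate feas ce z_gt0 z_lt (fun p u => objective_le feas) zz_le.
have z_le c' : objective alpha beta <= alpha c' * ctx_rate beta' c'.
  have [->|c'c] := eqVneq c' c; first exact: ltW.
  rewrite (@eq_ctx_rate beta) => [|d cd]; last by apply: beta'_out; rewrite cd.
  exact: (minover_le (fun c => alpha c * ctx_rate beta c) (I : setT c')).
have [alpha' [alpha'_ge0 sum_alpha' z_lt_all]] :=
  reweight_all_gt alpha_ge0 sum_alpha (fun c' => ctx_rate_ge0 c' beta'_ge0) z_gt0 z_le z_lt_c.
have := alpha_opt alpha' beta' (And4 alpha'_ge0 beta'_ge0 sum_alpha' sum_beta').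
rewrite objectiveE leNgt => /negP; apply.
by apply: (minover_gt (I : setT c)) => c' _; exact: z_lt_all.
Qed.

End Optimality.

Theorem proposition5 (R : realType) (k : nat) (C D : finType)
  (ctx : D -> C) (M : set R) (H : set 'rV[R]_k)
  (KL : param R k -> param R k -> R) (thstar : D -> param R k) (m : C -> nat)
  (hcompact : compact (M `*` H))
  (hstar : forall d, (M `*` H) (thstar d))
  (hdistinct : injective (fun d => mu (thstar d)))
  (hm : forall c, (0 < m c)%N /\ (m c < #|[set d : D | ctx d == c]|)%N)
  (hKLge0 : forall th th', (M `*` H) th -> (M `*` H) th' -> 0 <= KL th th')
  (hKL0 : forall th th', (M `*` H) th -> (M `*` H) th' ->
            KL th th' = 0 <-> th = th')
  (hKLC1 : forall th, (M `*` H) th -> C1_on (KL th) (M `*` H))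
  (alpha : C -> R) (beta : D -> R) :
  optimal ctx (M `*` H) KL thstar m alpha beta ->
  exists z : R, 0 < z /\
    forall c d d', Pc ctx thstar m c d -> Uc ctx thstar m c d' ->
      minover (Pc ctx thstar m c)
        (fun dt => alpha c * G (M `*` H) KL thstar dt d' (beta dt) (beta d')) = z /\
      minover (Uc ctx thstar m c)
        (fun dt' => alpha c * G (M `*` H) KL thstar d dt' (beta d) (beta dt')) = z.
Proof.
move=> opt; have no_slack := optimal_no_slack hcompact hstar hdistinct hm hKLge0 hKL0 hKLC1 opt.
have z_gt0 := objective_gt0 hcompact hstar hdistinct hm hKLge0 hKL0 hKLC1 opt.
exists (objective ctx (M `*` H) KL thstar m alpha beta); split => // c d d' Pd Ud'.
have feas := opt.1.
split; apply/le_anti/andP; split.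
- rewrite leNgt; apply/negP => lt_min; apply: no_slack (Uc_ctx Ud') lt_min _ => p u Pp Uu [pd'|->].
    by case: Ud' => _; rewrite -pd'.
  exact: (minover_le (fun dt => alpha c * _ dt d' (beta dt) (beta d')) Pp).
- by apply: (minover_ge Pd) => p Pp; exact: objective_le.
- rewrite leNgt; apply/negP => lt_min; apply: no_slack (Pc_ctx Pd) lt_min _ => p u Pp Uu [->|ud].
    exact: (minover_le (fun dt' => alpha c * _ d dt' (beta d) (beta dt')) Uu).
  by case: Uu => _; rewrite ud.
- by apply: (minover_ge Ud') => u Uu; exact: objective_le.
Qed.
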